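(* Let $a,d\in\mathbb{N}$ and $m,n\in\mathbb{N}$ with $m,n\ge 2$. Let $X_1,\dots,X_m$ be i.i.d. random variables uniformly distributed on $\{1,\dots,a\}$ and $Y_1,\dots,Y_n$ i.i.d. random variables uniformly distributed on $\{1,\dots,d\}$, independent of the $X_i$. Let $X^{(1)}\ge X^{(2)}$ be the largest and second largest values among $X_1,\dots,X_m$ (counted with multiplicity), and similarly $Y^{(1)}\ge Y^{(2)}$ among $Y_1,\dots,Y_n$. Let $P=\Pr\left(X^{(1)}\le Y^{(1)}\text{ and }X^{(2)}\le Y^{(2)}\right)$. If $a\ge d$, then \begin{align*} P&= \sum_{y_1=2}^{d} \sum_{y_2=1}^{y_{1}-1} \frac{n\big(y_2^{n-1}-(y_2-1)^{n-1}\big)\big(m(y_1-y_2)y_{2}^{m-1}+y_{2}^{m} \big)}{a^m d^n}\\ & \quad + \sum_{y_{1}=1}^{d}\frac{\big( y_1^n-(y_1-1)^{n}-n(y_1-1)^{n-1} \big)\, y_{1}^{m}}{a^m d^n}, \end{align*} and if $a\le d$, then \begin{align*} P&= \sum_{y_1=2}^{a} \sum_{y_2=1}^{y_{1}-1} \frac{n\big(y_2^{n-1}-(y_2-1)^{n-1}\big)\big(m(y_1-y_2)y_{2}^{m-1}+y_{2}^{m} \big)}{a^m d^n} \\ & \quad + \sum_{y_{1}=1}^{a}\frac{\big( y_1^n-(y_1-1)^{n}-n(y_1-1)^{n-1} \big)\, y_{1}^{m}}{a^m d^n} \\ & \quad + \sum_{y_{1}=a+1}^d \sum_{y_2=1}^a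 \frac{n\big(y_2^{n-1}-(y_2-1)^{n-1}\big)\big(m(a-y_2)y_{2}^{m-1}+y_{2}^{m} \big)}{a^m d^n} \\ & \quad + \frac{a^m d^n-n(d-a)a^{n+m-1}-a^{m+n}}{a^m d^n}. \end{align*}
   Context: $X^{(i)}$ denotes the $i$-th largest of the dice values (order statistics). In the paper's notation the event is $\{X_i\}_m>_{2,0}\{Y_j\}_n$: none of the comparisons $X^{(1)}>Y^{(1)}$, $X^{(2)}>Y^{(2)}$ holds (ties go to the defender). *)

From mathcomp Require Import all_boot all_order all_algebra.
Set Implicit Arguments. Unset Strict Implicit. Unset Printing Implicit Defensive.
Import GRing.Theory Num.Theory.

Definition kth_largest (s : seq nat) (k : nat) : nat := nth 0 (sort geq s) k.

(* Outcome of m dice with faces {1..a}: x : 'I_m -> 'I_a, die i shows (x i).+1 *)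
Definition dice_vals (m a : nat) (x : {ffun 'I_m -> 'I_a}) : seq nat :=
  [seq (val (x i)).+1 | i <- enum 'I_m].

Definition defender_wins_both (m a n d : nat)
    (xy : {ffun 'I_m -> 'I_a} * {ffun 'I_n -> 'I_d}) : bool :=
  (kth_largest (dice_vals xy.1) 0 <= kth_largest (dice_vals xy.2) 0) &&
  (kth_largest (dice_vals xy.1) 1 <= kth_largest (dice_vals xy.2) 1).

(* Probability under X_1..X_m iid uniform on {1..a}, Y_1..Y_n iid uniform on
   {1..d}, all independent: the uniform measure on {1..a}^m x {1..d}^n. *)
Definition prob_event (m a n d : nat) : rat :=
  (#|[set xy : {ffun 'I_m -> 'I_a} * {ffun 'I_n -> 'I_d}
        | defender_wins_both xy]|%:R / (a ^ m * d ^ n)%:R)%R.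

From mathcomp Require Import all_boot all_order all_algebra.
From mathcomp Require Import zify ring.
Import GRing.Theory.
Set Implicit Arguments. Unset Strict Implicit. Unset Printing Implicit Defensive.

(* Condition on the defender's dice.  If their two largest values are u >= v,
   the attacker's outcomes in the event are those with no die above u and at
   most one above v: all dice <= v, or exactly one in (v, u], which gives
   min(v,a)^m + m (min(u,a) - min(v,a)) min(v,a)^(m-1) outcomes.  The same count
   is the joint distribution function of the defender's top pair, so inclusion
   and exclusion gives its mass: n (v^(n-1) - (v-1)^(n-1)) for v < u, and
   u^n - (u-1)^n - n (u-1)^(n-1) for v = u.  Summing over u splits at u = a;
   above a the attacker count is constant in v > a and the sum telescopes. *)

Lemma card_ord_ltn c v : #|[set j : 'I_c | j < v]| = minn v c.
Proof.
have -> : #|[set j : 'I_c | j < v]| = size [seq j <- iota 0 c | j < v].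
  rewrite -val_enum_ord filter_map size_map enumT cardsE cardE /enum_mem.
  by apply/congr1/eq_filter => j; rewrite !inE.
case: (leqP v c) => [vc|cv]; first by rewrite (filter_iota_ltn 0 vc) size_iota.
rewrite (all_filterP _) ?size_iota //.
by apply/allP => j; rewrite mem_iota => /andP[_ jc]; apply: ltn_trans cv.
Qed.

Lemma card_ord_range c v u : v <= u ->
  #|[set j : 'I_c | v <= j < u]| = minn u c - minn v c.
Proof.
move=> vu; rewrite -!card_ord_ltn -cardsDS; last first.
  by apply/subsetP => j; rewrite !inE => jv; apply: leq_trans jv vu.
by apply: eq_card => j; rewrite !inE -leqNgt andbC.
Qed.

Lemma card_set_nat (T : finType) (P : pred T) : #|[set t | P t]| = \sum_t (P t : nat).
Proof. by rewrite -sum1dep_card big_mkcond; apply: eq_bigr => t _; case: (P t). Qed.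

(* Outcomes of [k] dice with [c] faces whose maximum is [<= u] and second
   largest [<= v] (when [v <= u]). *)
Definition top2_le_count k c u v := minn v c ^ k + k * (minn u c - minn v c) * minn v c ^ k.-1.

Section FewExceed.
Variables (I : finType) (c : nat).
Implicit Types (x : {ffun I -> 'I_c}) (t u v : nat).

(* Read [x i] as the die value [(x i).+1]: [t <= x i] says die [i] exceeds [t]. *)
Definition nexceed t x := #|[set i | t <= x i]|.

Lemma nexceed_eq0 t x : (nexceed t x == 0) = (x \in ffun_on [set j : 'I_c | j < t]).
Proof.
rewrite cards_eq0; apply/eqP/ffun_onP => [/setP E i | H].
  by have := E i; rewrite !inE ltnNge => ->.
by apply/setP => i; have := H i; rewrite !inE ltnNge => /negbTE.
Qed.

Lemma nexceed_mono t t' x : t <= t' -> nexceed t' x <= nexceed t x.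
Proof.
by move=> tt; apply/subset_leq_card/subsetP => i; rewrite !inE; apply: leq_trans.
Qed.

Section Range.
Variables (u v : nat).
Hypothesis vu : v <= u.

Let low := [set j : 'I_c | j < v].
Let mid := [set j : 'I_c | v <= j < u].
Let lone j : I -> pred 'I_c := fun i => if i == j then mem mid else mem low.

Lemma lone_familyE x j :
  (x \in family (lone j)) = ([set i | v <= x i] == [set j]) && (nexceed u x == 0).
Proof.
rewrite nexceed_eq0; apply/familyP/andP => [H | [/eqP S /ffun_onP U] i].
  split.
    apply/eqP/setP => i; rewrite !inE; have := H i; rewrite /lone.
    by case: (i == j); rewrite !inE ?ltnNge; [case/andP => -> | move/negbTE].
  apply/ffun_onP => i; have := H i; rewrite /lone !inE.
  by case: (i == j); rewrite !inE; [case/andP | move/leq_trans; apply].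
have := U i; move/setP/(_ i): S; rewrite /lone !inE => Si xu.
by case: (i == j) Si; rewrite !inE ?xu ?andbT ?ltnNge => ->.
Qed.

Lemma few_exceed_split x :
  ((nexceed u x == 0) && (nexceed v x <= 1) : nat)
  = (nexceed v x == 0) + \sum_j (x \in family (lone j) : nat).
Proof.
under eq_bigr do rewrite lone_familyE.
rewrite /nexceed; set S := [set i | v <= x i].
have S_neq1 j : #|S| != 1 -> (S == [set j]) = false.
  by apply: contraNF => /eqP->; rewrite cards1.
case: (eqVneq #|S| 1) => [S1 | S_ne1]; last first.
  rewrite big1 => [|j _]; last by rewrite S_neq1.
  case: (posnP #|S|) => [S0 | S_gt0].
    by have := nexceed_mono x vu; rewrite /nexceed -/S S0 leqn0 => ->.
  by rewrite (_ : (#|S| <= 1) = false) ?andbF //; lia.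
have /cards1P[j0 Sj0] : #|S| == 1 by rewrite S1.
rewrite S1 (bigD1 j0) //= Sj0 eqxx big1 => [|j /negbTE j0j].
  by rewrite /= andbT addn0.
by rewrite (inj_eq set1_inj) eq_sym j0j.
Qed.

Lemma card_lone_family j : #|family (lone j)| = (minn u c - minn v c) * minn v c ^ #|I|.-1.
Proof.
rewrite card_family foldrE big_map big_enum /= (bigD1 j) //= /lone eqxx.
rewrite (eq_bigr (fun _ => minn v c)) => [|i /negbTE ->]; last exact: card_ord_ltn.
by rewrite card_ord_range // prod_nat_const cardC1.
Qed.

Lemma card_few_exceed :
  #|[set x | (nexceed u x == 0) && (nexceed v x <= 1)]| = top2_le_count #|I| c u v.
Proof.
rewrite card_set_nat (eq_bigr _ (fun x _ => few_exceed_split x)) big_split /=.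
rewrite exchange_big /= -card_set_nat; congr (_ + _).
  rewrite (@eq_card _ _ (ffun_on [set j : 'I_c | j < v])) => [|x].
    by rewrite card_ffun_on card_ord_ltn.
  by rewrite inE nexceed_eq0.
under eq_bigr => j _ do rewrite -card_set_nat cardsE card_lone_family.
by rewrite sum_nat_const mulnA.
Qed.
End Range.
End FewExceed.

Lemma sorted_geq_nth_leq (s : seq nat) k t : sorted geq s -> k < size s ->
  (nth 0 s k <= t) = (count (fun z => t < z) s <= k).
Proof.
elim: s k => [|h s IH] k //= s_sorted k_lt.
have s_le_h : all (geq h) s.
  by apply: order_path_min s_sorted => x y z yx zy; apply: leq_trans zy yx.
have [h_le_t | t_lt_h] := leqP h t; last first.
  case: k k_lt => [|k] k_lt /=; first by rewrite leqNgt t_lt_h.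
  by rewrite add1n ltnS IH // (path_sorted s_sorted).
have -> : count (fun z => t < z) s = 0.
  apply/eqP; rewrite -leqn0 leqNgt -has_count; apply/hasPn => z /(allP s_le_h) zh.
  by rewrite -leqNgt (leq_trans zh).
case: k k_lt => [|k] k_lt //=; rewrite leq0n.
by apply: leq_trans h_le_t; apply: (allP s_le_h); exact: mem_nth.
Qed.

Lemma kth_largest_leq (s : seq nat) k t : k < size s ->
  (kth_largest s k <= t) = (count (fun z => t < z) s <= k).
Proof.
move=> ks; rewrite /kth_largest sorted_geq_nth_leq ?count_sort ?size_sort //.
by apply: sort_sorted => y z; apply: leq_total.
Qed.

Section TopTwo.
Variables (m a : nat).
Implicit Types (x : {ffun 'I_m -> 'I_a}) (t u v : nat).

Definition top1 x := kth_largest (dice_vals x) 0.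
Definition top2 x := kth_largest (dice_vals x) 1.

Lemma count_dice_vals_gt t x : count (fun z => t < z) (dice_vals x) = nexceed t x.
Proof.
rewrite /dice_vals count_map /nexceed card_set_nat -sum1_count big_mkcond.
by rewrite -big_enum; apply: eq_bigr => i _ /=; rewrite ltnS; case: leqP.
Qed.

Lemma kth_largest_dice_leq k t x : k < m ->
  (kth_largest (dice_vals x) k <= t) = (nexceed t x <= k).
Proof.
by move=> km; rewrite kth_largest_leq ?count_dice_vals_gt // size_map size_enum_ord.
Qed.

Lemma top1_leq t x : 0 < m -> (top1 x <= t) = (nexceed t x == 0).
Proof. by move=> m0; rewrite /top1 kth_largest_dice_leq // leqn0. Qed.

Lemma top2_leq t x : 1 < m -> (top2 x <= t) = (nexceed t x <= 1).
Proof. exact: kth_largest_dice_leq. Qed.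

Hypothesis m_gt1 : 1 < m.
Let m_gt0 : 0 < m. Proof. exact: ltnW. Qed.

Lemma top2_le_top1 x : top2 x <= top1 x.
Proof. by rewrite top2_leq //; have := leqnn (top1 x); rewrite top1_leq // => /eqP->. Qed.

Lemma top1_le_faces x : top1 x <= a.
Proof.
rewrite top1_leq // cards_eq0; apply/eqP/setP => i.
by rewrite !inE leqNgt ltn_ord.
Qed.

Lemma top2_gt0 x : 0 < top2 x.
Proof.
rewrite ltnNge top2_leq // -ltnNge /nexceed.
by rewrite (eq_card (B := predT)) => [|i]; rewrite ?inE // card_ord.
Qed.

Lemma card_top_leq u v : v <= u ->
  #|[set x | (top1 x <= u) && (top2 x <= v)]| = top2_le_count m a u v.
Proof.
move=> vu; rewrite -[in RHS](card_ord m) -card_few_exceed //.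
by apply: eq_card => x; rewrite !inE top1_leq ?top2_leq.
Qed.

End TopTwo.

Section JointLaw.
Variables (T : finType) (f g : T -> nat).

Definition joint_cdf p q := #|[set t | (f t <= p) && (g t <= q)]|.
Definition joint_mass u v := #|[set t | (f t == u) && (g t == v)]|.

Local Open Scope ring_scope.

Lemma joint_mass_cdf (R : pzRingType) u v : (0 < u)%N -> (0 < v)%N ->
  (joint_mass u v)%:R = (joint_cdf u v)%:R - (joint_cdf u.-1 v)%:R
                        - (joint_cdf u v.-1)%:R + (joint_cdf u.-1 v.-1)%:R :> R.
Proof.
have eq_leq_pred k w : (0 < w)%N -> (k == w) = (k <= w)%N && ~~ (k <= w.-1)%N.
  by move=> w0; rewrite -ltnNge prednK // -eqn_leq.
move=> u0 v0; rewrite /joint_mass /joint_cdf !card_set_nat !natr_sum.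
rewrite -!sumrB -big_split; apply: eq_bigr => t _ /=.
rewrite (eq_leq_pred _ _ u0) (eq_leq_pred _ _ v0).
have fu : (f t <= u.-1)%N ==> (f t <= u)%N by apply/implyP => /leq_trans; apply; apply: leq_pred.
have gv : (g t <= v.-1)%N ==> (g t <= v)%N by apply/implyP => /leq_trans; apply; apply: leq_pred.
case: (f t <= u.-1)%N fu; case: (f t <= u)%N => // _;
  case: (g t <= v.-1)%N gv; case: (g t <= v)%N => // _ /=;
  by rewrite ?(mulr0n, mulr1n, subr0, addr0, subrr, sub0r, addNr).
Qed.

Lemma sum_nat_pick (R : pzSemiRingType) (F : nat -> R) lo hi k : (lo <= k < hi)%N ->
  \sum_(lo <= i < hi) F i * (k == i)%:R = F k.
Proof.
move=> k_in; rewrite (bigD1_seq k) ?mem_index_iota ?iota_uniq //= eqxx mulr1.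
by rewrite big1 ?addr0 // => i; rewrite eq_sym => /negbTE->; rewrite mulr0.
Qed.

Lemma sum_joint_mass (R : pzSemiRingType) (G : nat -> nat -> R) lo hi :
  (forall t, lo <= f t < hi)%N -> (forall t, lo <= g t < hi)%N ->
  \sum_t G (f t) (g t) =
  \sum_(lo <= u < hi) \sum_(lo <= v < hi) G u v * (joint_mass u v)%:R.
Proof.
move=> f_in g_in.
transitivity (\sum_t \sum_(lo <= u < hi) \sum_(lo <= v < hi)
                G u v * ((f t == u) && (g t == v))%:R).
  apply: eq_bigr => t _.
  under eq_bigr do under eq_bigr do rewrite -mulnb mulnC natrM mulrA.
  under eq_bigr do rewrite -mulr_suml sum_nat_pick //.
  by rewrite sum_nat_pick.
rewrite exchange_big; apply: eq_bigr => u _; rewrite exchange_big; apply: eq_bigr => v _.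
by rewrite /joint_mass card_set_nat natr_sum mulr_sumr.
Qed.

End JointLaw.

Local Open Scope ring_scope.

Lemma top2_le_countE (R : pzRingType) k c u v : (v <= u <= c)%N ->
  (top2_le_count k c u v)%:R = v%:R ^+ k + k%:R * (u%:R - v%:R) * v%:R ^+ k.-1 :> R.
Proof.
case/andP=> vu uc; rewrite /top2_le_count (minn_idPl uc) (minn_idPl (leq_trans vu uc)).
by rewrite natrD !natrM natrB // !natrX.
Qed.

Lemma top2_le_count_capl k c u v : (c <= u)%N -> top2_le_count k c u v = top2_le_count k c c v.
Proof. by move=> cu; rewrite /top2_le_count (minn_idPr cu) minnn. Qed.

Lemma top2_le_count_top k c u v : (c <= v)%N -> (c <= u)%N -> top2_le_count k c u v = (c ^ k)%N.
Proof.
by move=> cv cu; rewrite /top2_le_count (minn_idPr cv) (minn_idPr cu) subnn muln0 mul0n addn0.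
Qed.

Definition mass_lt n v : rat := n%:R * (v%:R ^+ n.-1 - v.-1%:R ^+ n.-1).
Definition mass_eq n u : rat := u%:R ^+ n - u.-1%:R ^+ n - n%:R * u.-1%:R ^+ n.-1.

Section DefenderLaw.
Variables (n d : nat).
Hypothesis n_gt1 : (1 < n)%N.

Local Notation cdf := (joint_cdf (@top1 n d) (@top2 n d)).
Local Notation mass := (joint_mass (@top1 n d) (@top2 n d)).

Lemma defender_cdf p q : (q <= p <= d)%N ->
  (cdf p q)%:R = q%:R ^+ n + n%:R * (p%:R - q%:R) * q%:R ^+ n.-1 :> rat.
Proof. by move=> qpd; rewrite /joint_cdf card_top_leq ?top2_le_countE //; case/andP: qpd. Qed.

Lemma defender_mass_lt u v : (0 < v)%N -> (v < u <= d)%N -> (mass u v)%:R = mass_lt n v.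
Proof.
move=> v0 vud; rewrite joint_mass_cdf; try lia.
rewrite !defender_cdf; try lia.
case: u v v0 vud => [|u] [|v] //= _ _.
by rewrite /mass_lt /= !mulrSr; ring.
Qed.

Lemma defender_mass_eq u : (0 < u <= d)%N -> (mass u u)%:R = mass_eq n u.
Proof.
move=> ud; rewrite joint_mass_cdf; try lia.
have -> : cdf u.-1 u = cdf u.-1 u.-1.
  apply: eq_card => y; rewrite !inE; have := top2_le_top1 n_gt1 y.
  by case: (leqP (top1 y) u.-1) => //= t1u t21; rewrite !(leq_trans t21) ?(leq_trans t1u) ?leq_pred.
rewrite !defender_cdf; try lia.
case: u ud => [|u] //= _.
by rewrite /mass_eq /= subrr mulr0 mul0r addr0 !mulrSr; ring.
Qed.

Lemma defender_mass_gt u v : (u < v)%N -> mass u v = 0%N.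
Proof.
move=> uv; apply/eqP; rewrite cards_eq0; apply/eqP/setP => y; rewrite !inE.
by have := top2_le_top1 n_gt1 y; do 2 case: eqP => [->|] //; lia.
Qed.

Lemma sum_defender_top (G : nat -> nat -> rat) :
  \sum_(y : {ffun 'I_n -> 'I_d}) G (top1 y) (top2 y) =
  \sum_(1 <= u < d.+1) (\sum_(1 <= v < u) G u v * mass_lt n v + G u u * mass_eq n u).
Proof.
rewrite (@sum_joint_mass _ _ _ _ G 1 d.+1) => [| y | y]; first last.
- by rewrite top2_gt0 // ltnS (leq_trans (top2_le_top1 n_gt1 y) (top1_le_faces n_gt1 y)).
- by rewrite ltnS top1_le_faces // andbT (leq_trans (top2_gt0 n_gt1 y) (top2_le_top1 n_gt1 y)).
apply: eq_big_nat => u /andP[u_gt0 u_le].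
rewrite (big_cat_nat _ (n := u)) ?(ltnW u_le) //= [X in _ + X]big_ltn //.
rewrite defender_mass_eq; last by rewrite u_gt0.
rewrite [X in _ + (_ + X)]big1_seq => [|v]; last first.
  by rewrite /= mem_index_iota => /andP[uv _]; rewrite defender_mass_gt ?mulr0.
rewrite addr0; congr (_ + _); apply: eq_big_nat => v /andP[v_gt0 vu].
by rewrite defender_mass_lt ?v_gt0 ?vu.
Qed.

End DefenderLaw.

Lemma card_defender_wins m a n d : (1 < m)%N -> (1 < n)%N ->
  #|[set xy : {ffun 'I_m -> 'I_a} * {ffun 'I_n -> 'I_d} | defender_wins_both xy]|%:R =
  \sum_(1 <= u < d.+1) (\sum_(1 <= v < u) (top2_le_count m a u v)%:R * mass_lt n v
                        + (top2_le_count m a u u)%:R * mass_eq n u) :> rat.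
Proof.
move=> m_gt1 n_gt1.
rewrite -(@sum_defender_top n d n_gt1 (fun u v => (top2_le_count m a u v)%:R)).
rewrite card_set_nat natr_sum -(pair_bigA _ (fun x y => (defender_wins_both (x, y) : nat)%:R)).
rewrite exchange_big; apply: eq_bigr => y _ /=.
by rewrite -card_top_leq ?top2_le_top1 // card_set_nat natr_sum.
Qed.

Lemma sum_mass_lt n a d : (a <= d)%N ->
  \sum_(a.+1 <= v < d.+1) mass_lt n v = n%:R * (d%:R ^+ n.-1 - a%:R ^+ n.-1).
Proof.
move=> ad; rewrite -(subnKC ad); elim: (d - a)%N => [|k IH].
  by rewrite addn0 big_geq // subrr mulr0.
by rewrite addnS big_nat_recr ?ltnS ?leq_addr //= IH /mass_lt; ring.
Qed.

(* Both sides count the outcomes of [n] dice with [d] faces whose two largest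
   values exceed [a]. *)
Lemma sum_mass_high n a d : (a <= d)%N ->
  \sum_(a.+1 <= u < d.+1) (\sum_(a.+1 <= v < u) mass_lt n v + mass_eq n u) =
  d%:R ^+ n - n%:R * (d%:R - a%:R) * a%:R ^+ n.-1 - a%:R ^+ n.
Proof.
move=> ad; rewrite -(subnKC ad); elim: (d - a)%N => [|k IH].
  by rewrite addn0 big_geq // subrr mulr0 mul0r subr0 subrr.
rewrite addnS big_nat_recr ?ltnS ?leq_addr //= IH sum_mass_lt ?leq_addr //.
by rewrite /mass_eq /= !mulrSr; ring.
Qed.

Lemma sum_attacker_below m a n N : (N <= a)%N ->
  \sum_(1 <= u < N.+1) (\sum_(1 <= v < u) (top2_le_count m a u v)%:R * mass_lt n v
                        + (top2_le_count m a u u)%:R * mass_eq n u) =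
  \sum_(2 <= u < N.+1) \sum_(1 <= v < u)
      mass_lt n v * (m%:R * (u%:R - v%:R) * v%:R ^+ m.-1 + v%:R ^+ m)
  + \sum_(1 <= u < N.+1) mass_eq n u * u%:R ^+ m.
Proof.
move=> Na; rewrite big_split /=; congr (_ + _).
  case: N Na => [|N] Na; first by rewrite !big_geq.
  rewrite big_ltn // big_geq // add0r; apply: eq_big_nat => u /andP[_ uN].
  apply: eq_big_nat => v /andP[_ vu].
  by rewrite top2_le_countE; [rewrite mulrC addrC | lia].
apply: eq_big_nat => u /andP[_ uN].
rewrite top2_le_countE; last lia.
by rewrite subrr mulr0 mul0r addr0 mulrC.
Qed.

Lemma sum_attacker_above m a n d : (0 < n)%N -> (a <= d)%N ->
  \sum_(a.+1 <= u < d.+1) (\sum_(1 <= v < u) (top2_le_count m a u v)%:R * mass_lt n v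
                           + (top2_le_count m a u u)%:R * mass_eq n u) =
  \sum_(a.+1 <= u < d.+1) \sum_(1 <= v < a.+1)
      mass_lt n v * (m%:R * (a%:R - v%:R) * v%:R ^+ m.-1 + v%:R ^+ m)
  + (a%:R ^+ m * d%:R ^+ n - n%:R * (d%:R - a%:R) * a%:R ^+ (n + m).-1 - a%:R ^+ (m + n)).
Proof.
move=> n_gt0 ad.
transitivity (\sum_(a.+1 <= u < d.+1)
    (\sum_(1 <= v < a.+1) mass_lt n v * (m%:R * (a%:R - v%:R) * v%:R ^+ m.-1 + v%:R ^+ m)
     + a%:R ^+ m * (\sum_(a.+1 <= v < u) mass_lt n v + mass_eq n u))).
  apply: eq_big_nat => u /andP[au _].
  rewrite (big_cat_nat _ (n := a.+1)) //= top2_le_count_top ?(ltnW au) //.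
  rewrite [in RHS]mulrDr [in RHS]mulr_sumr addrA natrX; congr (_ + _ + _).
    apply: eq_big_nat => v /andP[_ va].
    by rewrite top2_le_count_capl ?(ltnW au) // top2_le_countE ?leqnn ?andbT // mulrC addrC.
  apply: eq_big_nat => v /andP[av _].
  by rewrite top2_le_count_top ?(ltnW av) ?(ltnW au) // natrX mulrC.
rewrite big_split /= -mulr_sumr sum_mass_high //.
have -> : (n + m).-1 = (n.-1 + m)%N by lia.
by rewrite !exprD; ring.
Qed.

Theorem proposition6p4 (a d m n : nat) (ha : (1 <= a)%N) (hd : (1 <= d)%N)
    (hm : (2 <= m)%N) (hn : (2 <= n)%N) :
  let D : rat := (a ^ m * d ^ n)%:R in
  let T1 (y1 y2 : nat) : rat :=
    (n%:R * ((y2%:R : rat) ^+ n.-1 - (y2.-1)%:R ^+ n.-1)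
      * (m%:R * (y1%:R - y2%:R) * (y2%:R : rat) ^+ m.-1 + (y2%:R : rat) ^+ m)) / D in
  let T2 (y1 : nat) : rat :=
    (((y1%:R : rat) ^+ n - (y1.-1)%:R ^+ n - n%:R * (y1.-1)%:R ^+ n.-1)
      * (y1%:R : rat) ^+ m) / D in
  ((d <= a)%N ->
     prob_event m a n d =
       \sum_(2 <= y1 < d.+1) \sum_(1 <= y2 < y1) T1 y1 y2
       + \sum_(1 <= y1 < d.+1) T2 y1) /\
  ((a <= d)%N ->
     prob_event m a n d =
       \sum_(2 <= y1 < a.+1) \sum_(1 <= y2 < y1) T1 y1 y2
       + \sum_(1 <= y1 < a.+1) T2 y1
       + \sum_(a.+1 <= y1 < d.+1) \sum_(1 <= y2 < a.+1) T1 a y2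
       + ((a%:R : rat) ^+ m * (d%:R : rat) ^+ n
          - n%:R * (d%:R - a%:R) * (a%:R : rat) ^+ (n + m).-1
          - (a%:R : rat) ^+ (m + n)) / D).
Proof.
move=> D T1 T2; rewrite /T1 /T2 /prob_event card_defender_wins // -/D.
split=> [da | ad].
  under [X in _ = X + _]eq_bigr do rewrite -mulr_suml.
  by rewrite -!mulr_suml -mulrDl sum_attacker_below.
under [X in _ = X + _ + _ + _]eq_bigr do rewrite -mulr_suml.
under [X in _ = _ + _ + X + _]eq_bigr do rewrite -mulr_suml.
rewrite -!mulr_suml -!mulrDl (big_cat_nat _ (n := a.+1)) //=.
by rewrite sum_attacker_below // sum_attacker_above ?(ltnW hn) // addrA.
Qed.
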